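(* Let $\epsilon\ge 0$ and let $\mathcal{G}$ be a weighted congestion game with latency functions $\ell_e(x)=\alpha_e x$, $\alpha_e\ge 0$. Define, for every strategy profile $S=(s_1,\dots,s_n)$, $$\Phi_\epsilon(S)=\frac12\sum_{e\in E}\alpha_e L_e(S)^2+\frac12\cdot\frac{1-\epsilon}{1+\epsilon}\sum_{e\in E}\sum_{i:\,e\in s_i}\alpha_e w_i^2 .$$ If $S$ is a local minimum of $\Phi_\epsilon$, i.e., $\Phi_\epsilon(S)\le\Phi_\epsilon(S_{-i}\diamond t)$ for every $i\in[n]$ and every $t\in\Sigma_i$, then $S$ is an $\epsilon$-PNE.
   Context: A weighted congestion game consists of a finite set $[n]=\{1,\dots,n\}$ of players, a finite set $E$ of resources, for each player $i$ a weight $w_i>0$ and a nonempty finite strategy set $\Sigma_i\subseteq 2^E$, and for each resource $e$ a latency function $\ell_e:\mathbb{R}_{\ge 0}\to\mathbb{R}_{\ge 0}$. For a strategy profile $S=(s_1,\dots,s_n)\in\prod_i\Sigma_i$, the congestion of $e$ is $L_e(S)=\sum_{i:\,e\in s_i}w_i$ and the cost of player $i$ is $c_i(S)=\sum_{e\in s_i}\ell_e(L_e(S))$. For $t\in\Sigma_i$, $(S_{-i}\diamond t)$ denotes the profile obtained from $S$ by replacing $s_i$ with $t$. For $\epsilon\ge 0$, $S$ is an $\epsilon$-approximate pure Nash equilibrium ($\epsilon$-PNE) if $c_i(S)\le(1+\epsilon)c_i(S_{-i}\diamond t)$ for all $i\in[n]$ and all $t\in\Sigma_i$. *)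

From HB Require Import structures.
From mathcomp Require Import all_boot all_order all_algebra.
Set Implicit Arguments. Unset Strict Implicit. Unset Printing Implicit Defensive.
Import Order.TTheory GRing.Theory Num.Theory.
Local Open Scope ring_scope.

Section WCG.
Variables (R : realFieldType) (n : nat) (E : finType).
Definition profile := {ffun 'I_n -> {set E}}.

Definition is_profile (Sigma : 'I_n -> {set {set E}}) (S : profile) : Prop :=
  forall i, S i \in Sigma i.

Definition congestion (w : 'I_n -> R) (S : profile) (e : E) : R :=
  \sum_(i < n | e \in S i) w i.

Definition cost (w : 'I_n -> R) (ell : E -> R -> R) (S : profile) (i : 'I_n) : R :=
  \sum_(e in S i) ell e (congestion w S e).

Definition deviate (S : profile) (i : 'I_n) (t : {set E}) : profile :=
  [ffun j => if j == i then t else S j].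

Definition is_eps_PNE (w : 'I_n -> R) (Sigma : 'I_n -> {set {set E}})
    (ell : E -> R -> R) (eps : R) (S : profile) : Prop :=
  forall i t, t \in Sigma i -> cost w ell S i <= (1 + eps) * cost w ell (deviate S i t) i.

Definition Phi (w : 'I_n -> R) (alpha : E -> R) (eps : R) (S : profile) : R :=
  2^-1 * \sum_(e : E) alpha e * congestion w S e ^+ 2
  + 2^-1 * ((1 - eps) / (1 + eps)) *
      \sum_(e : E) \sum_(i < n | e \in S i) alpha e * w i ^+ 2.
End WCG.

From HB Require Import structures.
From mathcomp Require Import all_boot all_order all_algebra.
From mathcomp Require Import ring lra.
Import Order.TTheory GRing.Theory Num.Theory.
Local Open Scope ring_scope.

(* Fix a player i deviating from s_i to t, and write S' = (S_{-i} <> t) and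
   c = (1 - eps) / (1 + eps).  Both Phi_eps and the costs of player i are sums
   over resources, so the whole argument happens resource by resource:
   - a deviation of player i only shifts the load of e by -w_i [e in s_i] and
     +w_i [e in t], and likewise for the weighted-square term of Phi_eps;
   - for each resource e, an elementary case analysis on (e in s_i, e in t)
     shows  (1 + eps) (phi_e(S') - phi_e(S)) <=
              w_i ((1 + eps) [e in t] alpha_e L_e(S') - [e in s_i] alpha_e L_e(S)),
     where phi_e is the contribution of e to Phi_eps.
   Summing over e, the left-hand side is nonnegative because S is a local
   minimum, and the right-hand side is w_i ((1 + eps) c_i(S') - c_i(S));
   dividing by w_i > 0 gives the eps-PNE inequality. *)

Section Deviation.
Variables (R : realFieldType) (n : nat) (E : finType).
Implicit Types (S : profile n E) (i : 'I_n) (t : {set E}) (e : E).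

Lemma sum_users_deviate S i t e (F : 'I_n -> R) :
  \sum_(j < n | e \in deviate S i t j) F j =
  \sum_(j < n | e \in S j) F j - (if e \in S i then F i else 0)
    + (if e \in t then F i else 0).
Proof.
rewrite big_mkcond [in RHS]big_mkcond /=.
rewrite (bigD1 i) //= [X in _ = X - _ + _](bigD1 i) //= /deviate ffunE eqxx.
under eq_bigr => j /negbTE neq_ji do rewrite ffunE neq_ji.
lra.
Qed.

Lemma deviate_self S i t : deviate S i t i = t.
Proof. by rewrite /deviate ffunE eqxx. Qed.

Variable w : 'I_n -> R.
Hypothesis w_ge0 : forall i, 0 <= w i.

Lemma congestion_ge0 S e : 0 <= congestion w S e.
Proof. exact: sumr_ge0. Qed.

Lemma weight_le_congestion S i e : e \in S i -> w i <= congestion w S e.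
Proof.
by move=> e_Si; rewrite /congestion (bigD1 i) //= lerDl sumr_ge0.
Qed.

Definition resource_potential (alpha : E -> R) (c : R) S e : R :=
  2^-1 * (alpha e * congestion w S e ^+ 2)
  + 2^-1 * c * \sum_(j < n | e \in S j) alpha e * w j ^+ 2.

Lemma Phi_resource_sum alpha eps S :
  Phi w alpha eps S =
  \sum_e resource_potential alpha ((1 - eps) / (1 + eps)) S e.
Proof.
by rewrite /Phi /resource_potential big_split /= -!mulr_sumr; ring.
Qed.

End Deviation.

(* The per-resource inequality, in abstract form: before the deviation the
   resource has load L and square term Q; [a] says player i (weight x) used it
   before, [b] that it uses it afterwards.  The hypothesis on L encodes that
   i's own weight is part of the load when a holds. *)
Lemma resource_bound (R : realFieldType) (a b : bool) (al L L' x eps c Q Q' : R) :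
  0 <= eps -> 0 < x -> 0 <= al -> 0 <= L -> (a -> x <= L) ->
  c * (1 + eps) = 1 - eps ->
  L' = L - (if a then x else 0) + (if b then x else 0) ->
  Q' = Q - (if a then al * x ^+ 2 else 0) + (if b then al * x ^+ 2 else 0) ->
  (1 + eps) * (2^-1 * (al * L' ^+ 2) + 2^-1 * c * Q'
               - (2^-1 * (al * L ^+ 2) + 2^-1 * c * Q))
  <= x * ((1 + eps) * (if b then al * L' else 0) - (if a then al * L else 0)).
Proof.
move=> eps_ge0 x_gt0 al_ge0 L_ge0 x_le_L c_def -> ->.
have alxx_ge0 : 0 <= al * x * x by rewrite !mulr_ge0 // ltW.
have ealxx_ge0 : 0 <= eps * al * x * x by rewrite !mulr_ge0 // ltW.
have ealxL_ge0 : 0 <= eps * al * x * L by rewrite !mulr_ge0 // ltW.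
have c_term : c * al * x * x * (1 + eps) = (1 - eps) * al * x * x.
  by rewrite -c_def; ring.
case: a x_le_L => x_le_L; case: b => /=; try lra.
(* Staying on e: the slack is eps alpha x (L - x), nonnegative as x <= L. *)
have : 0 <= eps * al * x * (L - x).
  by rewrite mulr_ge0 ?subr_ge0 ?x_le_L // !mulr_ge0 // ltW.
lra.
Qed.

Theorem mainTheorem5 (R : realFieldType) (n : nat) (E : finType)
    (w : 'I_n -> R) (Sigma : 'I_n -> {set {set E}}) (alpha : E -> R) (eps : R)
    (S : profile n E) :
  0 <= eps ->
  (forall i, 0 < w i) ->
  (forall i, Sigma i != set0) ->
  (forall e, 0 <= alpha e) ->
  is_profile Sigma S ->
  (forall (i : 'I_n) (t : {set E}), t \in Sigma i ->
     Phi w alpha eps S <= Phi w alpha eps (deviate S i t)) ->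
  is_eps_PNE w Sigma (fun e x => alpha e * x) eps S.
Proof.
move=> eps_ge0 w_gt0 _ alpha_ge0 _ local_min i t t_Si.
set c := (1 - eps) / (1 + eps); set S' := deviate S i t.
have c_def : c * (1 + eps) = 1 - eps by rewrite divfK // gt_eqF // ltr_pwDl.
have Phi_incr : 0 <= Phi w alpha eps S' - Phi w alpha eps S.
  by rewrite subr_ge0 local_min.
rewrite /cost deviate_self big_mkcond [X in _ <= _ * X]big_mkcond /=.
rewrite -subr_ge0 -(pmulr_rge0 _ (w_gt0 i)).
apply: le_trans (mulr_ge0 (addr_ge0 ler01 eps_ge0) Phi_incr) _.
rewrite !Phi_resource_sum -sumrB mulr_sumr mulr_sumr -sumrB mulr_sumr.
apply: ler_sum => e _; rewrite /resource_potential.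
apply: resource_bound => //.
- by apply: congestion_ge0 => j; apply: ltW.
- by apply: weight_le_congestion => j; apply: ltW.
- exact: sum_users_deviate.
- exact: sum_users_deviate.
Qed.
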